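(* Let $c\in\mathbb{Z}^n$ be a point with at least one positive and at least one negative coordinate. Then there exists a basis $\xi_1,\dots,\xi_n$ of the vector space $\mathbb{R}^n$ such that $\xi_i\in\mathbb{Z}^n_{\ge0}$ for $i=1,\dots,n$ and $\langle\xi_i,c\rangle=0$ for $i=1,\dots,n-1$.
   Context: $\langle\cdot,\cdot\rangle$ denotes the standard scalar product. *)

From HB Require Import structures.
From mathcomp Require Import all_boot all_order all_algebra.
From mathcomp Require Import reals.
Set Implicit Arguments. Unset Strict Implicit. Unset Printing Implicit Defensive.
Import Order.TTheory GRing.Theory Num.Theory.

(* Fix p and q with a := c_p > 0 and b := -c_q > 0, and write c_j = c_j^+ - c_j^-.
   For j <> q the vector ab e_j + b c_j^- e_p + a c_j^+ e_q is nonnegative and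
   orthogonal to c; together with e_q (placed last) these n vectors form a basis,
   because away from the diagonal the matrix they form has nonzero entries only in
   the columns p and q, and its entry (q, p) vanishes. *)

From HB Require Import structures.
From mathcomp Require Import all_boot all_order all_algebra.
From mathcomp Require Import reals.
From mathcomp Require Import perm ring.
Import Order.TTheory GRing.Theory Num.Theory.
Local Open Scope ring_scope.

Lemma sum_delta_mul {R : pzSemiRingType} {n} (j : 'I_n) (F : 'I_n -> R) :
  \sum_k (k == j)%:R * F k = F j.
Proof.
rewrite (bigD1 j) //= eqxx mul1r big1 ?addr0 // => k /negbTE ->.
by rewrite mul0r.
Qed.

Lemma maxr0_subN {R : realDomainType} (x : R) :
  Num.max x 0 - Num.max (- x) 0 = x.
Proof.
case: (lerP 0 x) => hx; first by rewrite max_r ?subr0 // oppr_le0.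
by rewrite max_l ?oppr_ge0 ?ltW // sub0r opprK.
Qed.

Lemma row_free_row_perm {F : fieldType} {m n} (s : 'S_m) (A : 'M[F]_(m, n)) :
  row_free (row_perm s A) = row_free A.
Proof. by rewrite /row_free row_permE eqmxMfull // row_full_unit unitmx_perm. Qed.

Lemma mulmx_eq0_pivot {F : fieldType} {m n} {v : 'rV[F]_m} {N : 'M[F]_(m, n)}
    {i : 'I_m} {k : 'I_n} :
  v *m N = 0 -> N i k != 0 -> (forall j, j != i -> v 0 j * N j k = 0) ->
  v 0 i = 0.
Proof.
move=> /(congr1 (fun A : 'rV_n => A 0 k)) + Nik0 vN0; rewrite !mxE.
rewrite (bigD1 i) //= big1 ?addr0 // => /eqP.
by rewrite mulf_eq0 (negbTE Nik0) orbF => /eqP.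
Qed.

Lemma row_free_offdiag_cols2 {F : fieldType} {n} (N : 'M[F]_n) (p q : 'I_n) :
  (forall j k, j != k -> k != p -> k != q -> N j k = 0) ->
  N q p = 0 -> (forall k, N k k != 0) -> row_free N.
Proof.
move=> Noff Nqp Ndiag; rewrite -kermx_eq0; apply/rowV0P => v /sub_kermxP vN.
have v0 k : k != p -> k != q -> v 0 k = 0.
  move=> kp kq; apply: (mulmx_eq0_pivot vN (Ndiag k)) => j jk.
  by rewrite Noff ?mulr0.
have vp : v 0 p = 0.
  apply: (mulmx_eq0_pivot vN (Ndiag p)) => j jp.
  by have [->|jq] := eqVneq j q; rewrite ?Nqp ?mulr0 // v0 ?mul0r.
have vq : v 0 q = 0.
  apply: (mulmx_eq0_pivot vN (Ndiag q)) => j jq.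
  by have [->|jp] := eqVneq j p; rewrite ?vp ?mul0r // v0 ?mul0r.
apply/rowP => k; rewrite mxE.
have [->|kp] := eqVneq k p; first exact: vp.
have [->|kq] := eqVneq k q; first exact: vq.
exact: v0.
Qed.

Section NonnegKernelBasis.

Context {n : nat} (c : 'rV[int]_n) (p q : 'I_n).
Hypotheses (cp_gt0 : 0 < c 0 p) (cq_lt0 : c 0 q < 0).

Definition kernel_basis : 'M[int]_n := \matrix_(j, k)
  if j == q then (k == q)%:R else
    (k == j)%:R * (c 0 p * - c 0 q) + (k == p)%:R * (- c 0 q * Num.max (- c 0 j) 0)
    + (k == q)%:R * (c 0 p * Num.max (c 0 j) 0).

Let cq_oppr_gt0 : 0 < - c 0 q. Proof. by rewrite oppr_gt0. Qed.

Lemma kernel_basis_ge0 j k : 0 <= kernel_basis j k.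
Proof.
rewrite mxE; case: ifP => _; first exact: ler0n.
by rewrite !addr_ge0 // !mulr_ge0 ?ler0n ?le_max ?lexx ?orbT // ltW.
Qed.

Lemma kernel_basis_diag_gt0 j : 0 < kernel_basis j j.
Proof.
rewrite mxE eqxx; case: ifP => [-> //|_].
rewrite mul1r -addrA ltr_wpDr ?mulr_gt0 //.
by rewrite addr_ge0 // !mulr_ge0 ?ler0n ?le_max ?lexx ?orbT // ltW.
Qed.

Lemma kernel_basis_orthogonal j :
  j != q -> \sum_k kernel_basis j k * c 0 k = 0.
Proof.
move=> /negbTE jq; under eq_bigr => k _ do rewrite mxE jq !mulrDl -!mulrA.
rewrite !big_split /= !sum_delta_mul.
have := maxr0_subN (c 0 j); set cpos := Num.max _ 0; set cneg := Num.max _ 0.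
by move=> <-; ring.
Qed.

Lemma kernel_basis_row_free (F : numFieldType) :
  row_free (map_mx (fun z : int => z%:~R : F) kernel_basis).
Proof.
apply: (row_free_offdiag_cols2 _ p q) => [j k jk kp kq||k].
- rewrite !mxE (negbTE kq) (negbTE kp) [k == j]eq_sym (negbTE jk).
  by case: ifP; rewrite // !mul0r !addr0.
- by rewrite !mxE eqxx; have /negbTE -> : p != q by apply: contraTneq cp_gt0 => ->;
    rewrite -leNgt ltW.
- by rewrite mxE intr_eq0 gt_eqF ?kernel_basis_diag_gt0.
Qed.

End NonnegKernelBasis.

(* Row i of Xi is xi_{i+1}. *)
Theorem lemma2p3 (R : realType) (n : nat) (c : 'rV[int]_n)
  (hpos : exists i : 'I_n, 0 < c 0 i)
  (hneg : exists i : 'I_n, c 0 i < 0) :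
  exists Xi : 'M[int]_n,
    row_free (map_mx (fun z : int => z%:~R : R) Xi)
    /\ (forall i j : 'I_n, 0 <= Xi i j)
    /\ (forall i : 'I_n, (i.+1 < n)%N -> \sum_(j < n) Xi i j * c 0 j = 0).
Proof.
case: n c hpos hneg => [|n] c [p hp] [q hq]; first by case: p hp.
pose s : 'S_n.+1 := tperm q ord_max.
exists (row_perm s (kernel_basis c p q)); split; [|split].
- by rewrite map_row_perm row_free_row_perm kernel_basis_row_free.
- by move=> i j; rewrite mxE kernel_basis_ge0.
- move=> i i_lt; under eq_bigr => k _ do rewrite mxE.
  apply: kernel_basis_orthogonal => //; apply: contraTneq i_lt => siq.
  have -> : i = s q by rewrite -siq tpermK.
  by rewrite tpermL ltnn.
Qed.
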